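(* Let $X$ be a fibrewise pointed space over $B$. Then (4) $\mathrm{cat}^B_B(X)\le\mathrm{TC}^B_B(X)\le\mathrm{cat}^B_B(X\times_BX)$; and (5) for every continuous map $\lambda:B'\to B$, $\mathrm{TC}^{B'}_{B'}(\lambda^*(X))\le\mathrm{TC}^B_B(X)$.
   Context: A fibrewise space over $B$ is a space $X$ with $p_X:X\to B$; fibrewise maps satisfy $p_Y\circ f=p_X$. A fibrewise pointed space has $s_X:B\to X$ with $p_X\circ s_X=1_B$; fibrewise pointed maps satisfy also $f\circ s_X=s_Y$. A fibrewise pointed homotopy $H:X\times I\to Y$ satisfies $p_Y(H(x,t))=p_X(x)$ and $H(s_X(b),t)=s_Y(b)$; written $\simeq^B_B$. For a fibrewise pointed map $f:E\to X$, an open $U\supseteq s_X(B)$ is fibrewise pointed sectional if there is a fibrewise pointed map $s:U\to E$ with $f\circ s\simeq^B_B$ the inclusion; $\mathrm{secat}^B_B(f)$ is the least $n$ such that $X$ is covered by $n+1$ such open sets. The James–Morris fibrewise L.-S. category is $\mathrm{cat}^B_B(X)=\mathrm{secat}^B_B(s_X)$ ($B$ pointed by $1_B$), i.e. the least $n$ such that $X$ is covered by $n+1$ open sets $U\supseteq s_X(B)$ whose inclusion is fibrewise pointed homotopic to $s_X\circ p_X|_U$. $X\times_BX=\{(x,y):p_X(x)=p_X(y)\}$ with section $b\mapsto(s_X(b),s_X(b))$; $P_B(X)=\{(b,\alpha)\in B\times X^I:p_X\circ\alpha\equiv b\}$ with projection $(b,\alpha)\mapsto b$ and section $b\mapsto(b,c_{s_X(b)})$;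 $\Pi_X(b,\alpha)=(\alpha(0),\alpha(1))$; $\mathrm{TC}^B_B(X):=\mathrm{secat}^B_B(\Pi_X)$. For $\lambda:B'\to B$, $\lambda^*(X)=\{(b',x)\in B'\times X:\lambda(b')=p_X(x)\}$ with projection $(b',x)\mapsto b'$ and section $b'\mapsto(b',s_X(\lambda(b')))$, a fibrewise pointed space over $B'$. *)

From HB Require Import structures.
From mathcomp Require Import all_boot all_order all_algebra.
From mathcomp Require Import all_classical all_reals.
From mathcomp Require Import topology num_topology function_spaces subtype_topology ereal.
Import numFieldTopology.Exports.
Set Implicit Arguments. Unset Strict Implicit. Unset Printing Implicit Defensive.
Import Order.TTheory GRing.Theory Num.Theory.
Local Open Scope classical_set_scope.
Local Open Scope ring_scope.

Notation II R := (set_type [set x : R | 0 <= x <= 1]).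

Lemma II0_mem (R : realType) : (0 : R) \in [set x : R | 0 <= x <= 1].
Proof. by apply: mem_set; rewrite /= ?lexx ?ler01. Qed.
Lemma II1_mem (R : realType) : (1 : R) \in [set x : R | 0 <= x <= 1].
Proof. by apply: mem_set; rewrite /= ?lexx ?ler01. Qed.
Definition I0 (R : realType) : II R := exist (fun w => w \in [set x : R | 0 <= x <= 1]) 0 (II0_mem R).
Definition I1 (R : realType) : II R := exist (fun w => w \in [set x : R | 0 <= x <= 1]) 1 (II1_mem R).

(** A fibrewise pointed space over B (data + the equation p o s = 1_B);
    continuity of p and s is the separate predicate [is_fpspace]. *)
Record fpsp (B : topologicalType) := FPSp {
  fp_T :> topologicalType;
  fp_p : fp_T -> B;
  fp_s : B -> fp_T;
  fp_ps : forall b, fp_p (fp_s b) = b }.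
Arguments fp_T {B} _.
Arguments fp_p {B} _ _.
Arguments fp_s {B} _ _.
Arguments fp_ps {B} _ _.

Definition is_fpspace (B : topologicalType) (X : fpsp B) :=
  continuous (fp_p X) /\ continuous (fp_s X).

Definition fp_sectional (R : realType) (B : topologicalType) (E X : fpsp B)
    (f : E -> X) (U : set X) : Prop :=
  [/\ open U, range (fp_s X) `<=` U &
   exists s : X -> E,
     [/\ {within U, continuous s},
         (forall x, U x -> fp_p E (s x) = fp_p X x),
         (forall b, s (fp_s X b) = fp_s E b) &
     exists H : X * II R -> X,
       [/\ {within U `*` setT, continuous H},
           (forall x t, U x -> fp_p X (H (x, t)) = fp_p X x),
           (forall b t, H (fp_s X b, t) = fp_s X b),
           (forall x, U x -> H (x, I0 R) = f (s x)) &
           (forall x, U x -> H (x, I1 R) = x)]]].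

(** X is covered by n+1 fibrewise pointed sectional open sets. *)
Definition secat_le (R : realType) (B : topologicalType) (E X : fpsp B)
    (f : E -> X) (n : nat) : Prop :=
  exists Us : nat -> set X,
    (forall i, (i <= n)%N -> fp_sectional R f (Us i)) /\
    (forall x : X, exists i, (i <= n)%N /\ Us i x).

(** secat^B_B(f) in N u {+oo} (as an extended real; +oo if no such n). *)
Definition secat (R : realType) (B : topologicalType) (E X : fpsp B)
    (f : E -> X) : \bar R :=
  ereal_inf [set (n%:R)%:E | n in secat_le R f].

Definition fp_base (B : topologicalType) : fpsp B :=
  @FPSp B B id id (fun _ => erefl).

Definition fwcat (R : realType) (B : topologicalType) (X : fpsp B) : \bar R :=
  @secat R B (fp_base B) X (fp_s X).

Definition fibprod_set (B : topologicalType) (X : fpsp B) : set (X * X) :=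
  [set z | fp_p X z.1 = fp_p X z.2].
Arguments fibprod_set {B} X.

Lemma fibprod_s_mem (B : topologicalType) (X : fpsp B) (b : B) :
  (fp_s X b, fp_s X b) \in fibprod_set X.
Proof. by apply: mem_set. Qed.

Definition fibprod (B : topologicalType) (X : fpsp B) : fpsp B.
Proof.
refine (@FPSp B (set_type (fibprod_set X))
  (fun z => fp_p X (val z).1)
  (fun b => exist (fun w => w \in fibprod_set X) (fp_s X b, fp_s X b) (fibprod_s_mem X b)) (fun b => fp_ps X b)).
Defined.

Definition pathsp_set (R : realType) (B : topologicalType) (X : fpsp B)
    : set (B * {compact-open, II R -> X}) :=
  [set z | continuous (z.2 : II R -> X) /\ forall t, fp_p X (z.2 t) = z.1].
Arguments pathsp_set R {B} X.

Lemma pathsp_s_mem (R : realType) (B : topologicalType) (X : fpsp B) (b : B) :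
  (b, ((fun _ => fp_s X b) : {compact-open, II R -> X})) \in pathsp_set R X.
Proof. apply: mem_set; split; [exact: cst_continuous | by move=> t; exact: fp_ps]. Qed.

Definition pathsp (R : realType) (B : topologicalType) (X : fpsp B) : fpsp B.
Proof.
refine (@FPSp B (set_type (pathsp_set R X))
  (fun z => (val z).1)
  (fun b => exist (fun z => z \in pathsp_set R X) _ (pathsp_s_mem R X b)) (fun b => erefl)).
Defined.

Lemma Pi_mem (R : realType) (B : topologicalType) (X : fpsp B)
    (z : set_type (pathsp_set R X)) :
  ((val z).2 (I0 R), (val z).2 (I1 R)) \in fibprod_set X.
Proof.
apply: mem_set; have [_ h] := set_valP z; rewrite /fibprod_set /=.
by rewrite (h (I0 R)) (h (I1 R)).
Qed.

Definition Pi (R : realType) (B : topologicalType) (X : fpsp B) :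
  pathsp R X -> fibprod X := fun z => exist (fun w => w \in fibprod_set X) _ (Pi_mem z).

Definition fwTC (R : realType) (B : topologicalType) (X : fpsp B) : \bar R :=
  @secat R B (pathsp R X) (fibprod X) (@Pi R B X).

Definition pullback_set (B B' : topologicalType) (lam : B' -> B) (X : fpsp B)
    : set (B' * X) := [set z | lam z.1 = fp_p X z.2].
Arguments pullback_set {B B'} lam X.

Lemma pullback_s_mem (B B' : topologicalType) (lam : B' -> B) (X : fpsp B)
    (b' : B') : (b', fp_s X (lam b')) \in pullback_set lam X.
Proof. by apply: mem_set; rewrite /pullback_set /= fp_ps. Qed.

Definition pullback (B B' : topologicalType) (lam : B' -> B) (X : fpsp B)
    : fpsp B'.
Proof.
refine (@FPSp B' (set_type (pullback_set lam X))
  (fun z => (val z).1)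
  (fun b' => exist (fun z => z \in pullback_set lam X) _ (pullback_s_mem lam X b')) (fun b => erefl)).
Defined.
Arguments secat R {B E X} f.
Arguments fwcat R {B} X.
Arguments fwTC R {B} X.
Arguments fibprod {B} X.
Arguments pullback {B B'} lam X.

From HB Require Import structures.
From mathcomp Require Import all_boot all_order all_algebra.
From mathcomp Require Import all_classical all_reals.
From mathcomp Require Import topology num_topology function_spaces subtype_topology ereal normedtype.
Import numFieldTopology.Exports.
Set Implicit Arguments. Unset Strict Implicit. Unset Printing Implicit Defensive.
Import Order.TTheory GRing.Theory Num.Theory.
Local Open Scope classical_set_scope.
Local Open Scope ring_scope.

(* All three inequalities compare invariants of the form secat(f) and follow
   from one monotonicity principle (secat_le_of_preimage): if a map [j]
   pulls every fibrewise pointed sectional open set for [f] back to one for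
   [f'], then secat(f') <= secat(f).  The work is thus to transfer sections and
   fibrewise pointed homotopies along three maps:
   - cat <= TC, along [x |-> (s(p x), x)] : X -> X *_B X: the homotopy is the
     concatenation of three paths from [s(p x)] to [x];
   - TC <= cat(X *_B X), along the identity: a deformation of [(x, y)] into the
     section yields a path from [x] to [y] through the section;
   - TC(lam^* X) <= TC(X), along the projection lam^*X *_B' lam^*X -> X *_B X:
     sections and homotopies lift by pairing with the base point in [B']. *)

Section PointwiseContinuity.

Lemma continuous_comp_at {T U V : topologicalType} (f : T -> U) (g : U -> V) x :
  {for x, continuous f} -> {for f x, continuous g} ->
  {for x, continuous (fun y => g (f y))}.
Proof. exact: continuous_comp. Qed.

Lemma continuous_pair_at {T U V : topologicalType} (f : T -> U) (g : T -> V) x :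
  {for x, continuous f} -> {for x, continuous g} ->
  {for x, continuous (fun y => (f y, g y))}.
Proof. by move=> cf cg; apply: cvg_pair. Qed.

Lemma continuous_fst_at {T U : topologicalType} (p : T * U) :
  {for p, continuous (fun q : T * U => q.1)}.
Proof. exact: cvg_fst. Qed.

Lemma continuous_snd_at {T U : topologicalType} (p : T * U) :
  {for p, continuous (fun q : T * U => q.2)}.
Proof. exact: cvg_snd. Qed.

Lemma near_eq_continuous_at {T U : topologicalType} (f g : T -> U) (x : T) :
  (\forall y \near x, f y = g y) -> {for x, continuous g} ->
  {for x, continuous f}.
Proof.
move=> fg cg; have gf : \forall y \near x, g y = f y by apply: filterS fg.
have fgx : f x = g x := nbhs_singleton fg.
apply: cvg_trans (near_eq_cvg gf) _; rewrite fgx; exact: cg.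
Qed.

Lemma glue_continuous_at {T U : topologicalType} (f g : T -> U) (P : T -> bool) x :
  {for x, continuous f} -> {for x, continuous g} -> f x = g x ->
  {for x, continuous (fun y => if P y then f y else g y)}.
Proof.
move=> cf cg fgx W; rewrite (_ : (if P x then f x else g x) = g x); last by case: (P x).
move=> Wgx; have Wfx : nbhs (f x) W by rewrite fgx.
have fgW : \forall y \near x, W (f y) /\ W (g y).
  by apply: filterI; [exact: cf | exact: cg].
suff : \forall y \near x, W (if P y then f y else g y) by [].
by apply: filterS fgW => y [? ?]; case: (P y).
Qed.

Lemma within_open_continuous_at {T U : topologicalType} (A : set T) (f : T -> U) :
  open A -> {within A, continuous f} <-> (forall x, A x -> {for x, continuous f}).
Proof.
move=> oA; rewrite continuous_open_subspace //.
by split=> cf x Ax; apply: cf; [rewrite inE | move: Ax; rewrite inE].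
Qed.

Lemma openXT {T V : topologicalType} (A : set T) :
  open A -> open (A `*` [set: V]).
Proof.
move=> oA; have -> : A `*` [set: V] = fst @^-1` A.
  by apply/seteqP; split=> -[a b] //= [].
by apply: open_comp => // p _; exact: cvg_fst.
Qed.

Lemma near_fst_open {T V : topologicalType} (A : set T) x (v : V) :
  open A -> A x -> \forall p \near (x, v), A p.1.
Proof.
move=> oA Ax; have AV : nbhs (x, v) (A `*` [set: V]).
  by apply: open_nbhs_nbhs; split; [exact: openXT | split].
by apply: filterS AV => p [].
Qed.

Lemma within_openXT_continuous_at {T V U : topologicalType} (A : set T)
    (f : T * V -> U) : open A ->
  {within A `*` [set: V], continuous f} <->
  (forall x v, A x -> {for (x, v), continuous f}).
Proof.
move=> oA; rewrite within_open_continuous_at; last exact: openXT.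
by split=> cf => [x v Ax | [x v] [/= Ax _]]; apply: cf.
Qed.

End PointwiseContinuity.

Section SubspaceMaps.

Lemma set_val_inj {T : Type} (A : set T) (a b : set_type A) :
  sval a = sval b -> a = b.
Proof. by move=> ab; apply: eq_sig_hprop => // y; exact: Prop_irrelevance. Qed.

Lemma continuous_set_val_at {T U : topologicalType} (A : set U) (f : T -> set_type A) x :
  {for x, continuous (fun y => sval (f y))} -> {for x, continuous f}.
Proof.
move=> cf W [? /= [[O oO <-]] Ofx] /filterS; apply; apply: cf.
exact: open_nbhs_nbhs.
Qed.

Lemma continuous_sval_at {T : topologicalType} (A : set T) (a : set_type A) :
  {for a, continuous (fun b : set_type A => sval b)}.
Proof. exact: initial_continuous. Qed.

Definition sub_or {T : Type} (A : set T) (d : set_type A) (x : T) : set_type A :=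
  insubd d x.

Lemma sub_orE {T : Type} (A : set T) (d : set_type A) (x : T) :
  A x -> sval (sub_or d x) = x.
Proof. by move=> Ax; rewrite /sub_or insubdK //; exact: mem_set. Qed.

Lemma sub_or_ind {T : Type} (A : set T) (d : set_type A) (x : T) (P : T -> Prop) :
  P (sval d) -> P x -> P (sval (sub_or d x)).
Proof. by rewrite /sub_or /insubd; case: insubP => [y _ ->|]. Qed.

Lemma sub_or_val {T : Type} (A : set T) (d y : set_type A) : sub_or d (sval y) = y.
Proof. exact: valKd. Qed.

Lemma sub_or_continuous_at {Z T : topologicalType} (A : set T) (d : Z -> set_type A)
    (g : Z -> T) z :
  {for z, continuous g} -> (\forall y \near z, A (g y)) ->
  {for z, continuous (fun y => sub_or (d y) (g y))}.
Proof.
move=> cg Ag; apply: continuous_set_val_at; apply: near_eq_continuous_at cg.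
by apply: filterS Ag => y Ay; rewrite sub_orE.
Qed.

End SubspaceMaps.

(* The unit interval: a continuous retraction [clampI] of R onto it, which
   gives continuous affine reparametrisations of I, and compactness and
   regularity of I (needed for the evaluation map on the compact-open
   topology). *)
Section UnitInterval.
Variable R : realType.

Lemma clamp_mem (r : R) : Num.min (Num.max r 0) 1 \in [set x : R | 0 <= x <= 1].
Proof.
apply: mem_set => /=; rewrite le_min ge_min ler01 lexx orbT andbT.
by rewrite le_max lexx orbT.
Qed.

Definition clampI (r : R) : II R :=
  exist (fun w => w \in [set x : R | 0 <= x <= 1]) _ (clamp_mem r).

Lemma clampI_val (r : R) : 0 <= r <= 1 -> sval (clampI r) = r.
Proof. by case/andP=> r0 r1; rewrite /= max_l // min_l. Qed.

Lemma clampI0 : clampI 0 = I0 R.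
Proof. by apply: set_val_inj; rewrite clampI_val // lexx ler01. Qed.

Lemma clampI1 : clampI 1 = I1 R.
Proof. by apply: set_val_inj; rewrite clampI_val // lexx ler01. Qed.

Lemma clampI_continuous : continuous clampI.
Proof.
move=> r; apply: continuous_set_val_at.
apply: (@continuous_min R R (fun r : R => Num.max r 0) (fun _ => 1)).
  by apply: (@continuous_max R R id (fun _ => 0)) => //; exact: cvg_cst.
exact: cvg_cst.
Qed.

Lemma affine_continuous (a b : R) :
  continuous (fun t : II R => clampI (a + b * sval t)).
Proof.
move=> t; apply: (@continuous_comp _ _ _ (fun t : II R => a + b * sval t) clampI);
  last exact: clampI_continuous.
apply: (@cvgD R R^o _ (nbhs t) (nbhs_filter t)); first exact: cvg_cst.
apply: (@cvgM R _ (nbhs t) (nbhs_filter t)); first exact: cvg_cst.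
exact: continuous_sval_at.
Qed.

Lemma flip_continuous : continuous (fun t : II R => clampI (1 - sval t)).
Proof.
have -> : (fun t : II R => clampI (1 - sval t)) = (fun t => clampI (1 + -1 * sval t)).
  by apply: funext => t; rewrite mulN1r.
exact: affine_continuous.
Qed.

Lemma first_half_continuous : continuous (fun t : II R => clampI (2 * sval t)).
Proof.
have -> : (fun t : II R => clampI (2 * sval t)) = (fun t => clampI (0 + 2 * sval t)).
  by apply: funext => t; rewrite add0r.
exact: affine_continuous.
Qed.

Lemma second_half_continuous : continuous (fun t : II R => clampI (2 * sval t - 1)).
Proof.
have -> : (fun t : II R => clampI (2 * sval t - 1)) = (fun t => clampI (-1 + 2 * sval t)).
  by apply: funext => t; rewrite addrC.
exact: affine_continuous.
Qed.

Lemma II_compact : compact [set: II R].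
Proof.
have -> : [set: II R] = clampI @` `[0, 1].
  apply/seteqP; split => // t _; have /andP[t0 t1] := set_valP t.
  exists (sval t); first by rewrite /= in_itv /= t0 t1.
  by apply: set_val_inj; rewrite clampI_val // t0 t1.
apply: continuous_compact; first exact: continuous_subspaceT clampI_continuous.
exact: segment_compact.
Qed.

Lemma II_regular : @regular_space (II R).
Proof. exact: uniform_regular. Qed.

End UnitInterval.

Section PathFamilies.
Variable R : realType.

Definition family_continuous_at {Z Y : topologicalType} (a : Z -> II R -> Y) z :=
  forall t, {for (z, t), continuous (fun p : Z * II R => a p.1 p.2)}.

Definition preverse {Z Y : Type} (a : Z -> II R -> Y) (z : Z) (t : II R) : Y :=
  a z (clampI (1 - sval t)).

Definition pconcat {Z Y : Type} (a b : Z -> II R -> Y) (z : Z) (t : II R) : Y :=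
  if sval t <= 2^-1 then a z (clampI (2 * sval t))
  else b z (clampI (2 * sval t - 1)).

Lemma preverse0 {Z Y : Type} (a : Z -> II R -> Y) z : preverse a z (I0 R) = a z (I1 R).
Proof. by rewrite /preverse subr0 clampI1. Qed.

Lemma preverse1 {Z Y : Type} (a : Z -> II R -> Y) z : preverse a z (I1 R) = a z (I0 R).
Proof. by rewrite /preverse subrr clampI0. Qed.

Lemma pconcat0 {Z Y : Type} (a b : Z -> II R -> Y) z : pconcat a b z (I0 R) = a z (I0 R).
Proof. by rewrite /pconcat /= invr_ge0 ler0n mulr0 clampI0. Qed.

Lemma pconcat1 {Z Y : Type} (a b : Z -> II R -> Y) z : pconcat a b z (I1 R) = b z (I1 R).
Proof.
rewrite /pconcat /= ifF; last by apply/negbTE; rewrite -ltNge invf_lt1 // ltr1n.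
by rewrite mulr1 -clampI1; congr (b z (clampI _)); rewrite addrK.
Qed.

Lemma pconcat_ind {Z Y : Type} (P : Y -> Prop) (a b : Z -> II R -> Y) z t :
  (forall s, P (a z s)) -> (forall s, P (b z s)) -> P (pconcat a b z t).
Proof. by move=> Pa Pb; rewrite /pconcat; case: ifP. Qed.

Lemma reparam_continuous_at {Z Y : topologicalType} (a : Z -> II R -> Y)
    (phi : II R -> II R) z t :
  family_continuous_at a z -> continuous phi ->
  {for (z, t), continuous (fun p : Z * II R => a p.1 (phi p.2))}.
Proof.
move=> ca cphi; apply: (continuous_comp_at (f := fun p : Z * II R => (p.1, phi p.2))
  (g := fun p : Z * II R => a p.1 p.2)); last exact: ca.
apply: continuous_pair_at; first exact: continuous_fst_at.
by apply: (continuous_comp_at (f := snd) (g := phi));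
  [exact: continuous_snd_at | exact: cphi].
Qed.

Lemma preverse_continuous_at {Z Y : topologicalType} (a : Z -> II R -> Y) z :
  family_continuous_at a z -> family_continuous_at (preverse a) z.
Proof.
by move=> ca t; apply: reparam_continuous_at ca (@flip_continuous R).
Qed.

(* Concatenation of continuous families with matching endpoints at [z] is
   continuous at [z]: away from [t = 1/2] it is locally one of the two halves,
   and at [t = 1/2] the halves are glued. *)
Lemma pconcat_continuous_at {Z Y : topologicalType} (a b : Z -> II R -> Y) z :
  family_continuous_at a z -> family_continuous_at b z -> a z (I1 R) = b z (I0 R) ->
  family_continuous_at (pconcat a b) z.
Proof.
move=> ca cb ab t; rewrite /pconcat.
have ca' := reparam_continuous_at (t := t) ca (@first_half_continuous R).
have cb' := reparam_continuous_at (t := t) cb (@second_half_continuous R).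
have ct : {for (z, t), continuous (fun p : Z * II R => sval p.2)}.
  apply: (continuous_comp_at (f := snd)); first exact: continuous_snd_at.
  exact: continuous_sval_at.
have [lt|gt|eq] := ltgtP (sval t) (2^-1).
- apply: (near_eq_continuous_at _ ca').
  have left_half : \forall p \near (z, t), sval p.2 < 2^-1.
    by apply: (ct [set r | r < 2^-1]); apply: open_nbhs_nbhs; split => //; exact: open_lt.
  by apply: filterS left_half => p /ltW ->.
- apply: (near_eq_continuous_at _ cb').
  have right_half : \forall p \near (z, t), 2^-1 < sval p.2.
    by apply: (ct [set r | 2^-1 < r]); apply: open_nbhs_nbhs; split => //; exact: open_gt.
  by apply: filterS right_half => p; rewrite ltNge => /negbTE ->.
- apply: glue_continuous_at => //=.
  by rewrite eq mulfV ?pnatr_eq0 // clampI1 ab subrr clampI0.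
Qed.

End PathFamilies.

(* The two halves of the exponential law for the compact-open topology:
   currying a map continuous along [{x} * V] is continuous at [x], and
   evaluation is continuous on continuous maps out of a compact regular space. *)
Section CompactOpen.

Lemma curry_continuous_at {U V W : topologicalType} (f : U * V -> W) (x : U) :
  (forall v, {for (x, v), continuous f}) ->
  {for x, continuous (curry f : U -> {compact-open, V -> W})}.
Proof.
move=> cf; apply/compact_open_cvgP => K O /= cptK oO fKO.
near=> z => w /= [+ + <-]; near: z.
move/compact_near_coveringP/near_covering_withinP : cptK; apply.
move=> v Kv; have [[P Q] [Px Qv] PQfO] : nbhs (x, v) (f @^-1` O).
  by apply: cf; move: oO; rewrite openE; apply; apply: fKO; exists v.
by exists (Q, P) => // -[b a] /= [Qb Pa] Kb; exact: PQfO.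
Unshelve. all: by end_near. Qed.

Lemma eval_continuous_at {V W : topologicalType} (u : {compact-open, V -> W}) (v : V) :
  compact [set: V] -> regular_space V -> continuous (u : V -> W) ->
  {for (u, v), continuous (fun p : {compact-open, V -> W} * V => p.1 p.2)}.
Proof.
move=> cptV regV cu D; rewrite /= nbhsE => -[O [oO Ouv]] /filterS; apply.
have [C Cv CO] : exists2 C, nbhs v C & forall z, closure C z -> O (u z).
  have [] := regV v (u @^-1` O); first by apply: cu; exact: open_nbhs_nbhs.
  by move=> C ? ?; exists C.
exists ([set g : {compact-open, V -> W} | g @` closure C `<=` O], closure C).
  split; [apply/open_nbhs_nbhs; split | exact: filterS (@subset_closure _ C) Cv].
  - apply: compact_open_open => //; apply: (subclosed_compact _ cptV) => //.
    exact: closed_closure.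
  - by move=> ? [z Cz <-]; exact: CO.
by case=> g r /= [gCO Cr]; apply: gCO; exists r.
Qed.

End CompactOpen.

Section FamilySources.
Variable R : realType.

Lemma family_of_map_continuous_at {W Y : topologicalType} (G : W * II R -> Y) w :
  (forall t, {for (w, t), continuous G}) ->
  family_continuous_at (fun w t => G (w, t)) w.
Proof.
move=> cG t; apply: (near_eq_continuous_at _ (cG t)).
by apply: (@nearW _ _ _ (nbhs_filter (w, t))) => -[].
Qed.

Lemma family_precomp_continuous_at {Z W Y : topologicalType} (j : Z -> W)
    (a : W -> II R -> Y) z :
  {for z, continuous j} -> family_continuous_at a (j z) ->
  family_continuous_at (fun z => a (j z)) z.
Proof.
move=> cj ca t; apply: (continuous_comp_at (f := fun p : Z * II R => (j p.1, p.2))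
  (g := fun p : W * II R => a p.1 p.2)); last exact: ca.
apply: continuous_pair_at; last exact: continuous_snd_at.
by apply: (continuous_comp_at (f := fst)); [exact: continuous_fst_at | exact: cj].
Qed.

Lemma family_postcomp_continuous_at {Z Y Y' : topologicalType} (h : Y -> Y')
    (a : Z -> II R -> Y) z :
  continuous h -> family_continuous_at a z ->
  family_continuous_at (fun z t => h (a z t)) z.
Proof.
move=> ch ca t; apply: (continuous_comp_at (g := h) (ca t)); exact: ch.
Qed.

Lemma family_slice_continuous {Z Y : topologicalType} (a : Z -> II R -> Y) z :
  family_continuous_at a z -> continuous (a z).
Proof.
move=> ca t; apply: (continuous_comp_at (f := fun s : II R => (z, s))
  (g := fun p : Z * II R => a p.1 p.2)); last exact: ca.
by apply: continuous_pair_at; [exact: cst_continuous | exact: cvg_id].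
Qed.

End FamilySources.

Section FibrewiseConstructions.
Variables (R : realType) (B : topologicalType) (X : fpsp B).

Lemma path_fibre (w : pathsp R X) t : fp_p X ((sval w).2 t) = (sval w).1.
Proof. by have [_] := set_valP w; apply. Qed.

(* The path [a] over [b] as a point of [P_B(X)] (the constant path at [s b]
   when [a] is not a continuous path in the fibre over [b]). *)
Definition path_point (b : B) (a : II R -> X) : pathsp R X :=
  sub_or (A := pathsp_set R X) (fp_s (pathsp R X) b) (b, a : {compact-open, II R -> X}).

Lemma path_point_val b a : continuous a -> (forall t, fp_p X (a t) = b) ->
  sval (path_point b a) = (b, a).
Proof. by move=> ca ab; rewrite /path_point sub_orE. Qed.

Lemma path_point_const b : path_point b (fun=> fp_s X b) = fp_s (pathsp R X) b.
Proof.
apply: set_val_inj; rewrite path_point_val //; last by move=> ?; exact: fp_ps.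
exact: cst_continuous.
Qed.

Lemma path_point_continuous_at {Z : topologicalType} (U : set Z) (beta : Z -> B)
    (a : Z -> II R -> X) z :
  open U -> U z -> {for z, continuous beta} ->
  (forall y, U y -> family_continuous_at a y) ->
  (forall y t, U y -> fp_p X (a y t) = beta y) ->
  {for z, continuous (fun y => path_point (beta y) (a y))}.
Proof.
move=> oU Uz cbeta ca aU; apply: sub_or_continuous_at.
  apply: continuous_pair_at => //.
  exact: (curry_continuous_at (f := fun p : Z * II R => a p.1 p.2) (ca z Uz)).
have Unear : \forall y \near z, U y := open_nbhs_nbhs (conj oU Uz).
apply: filterS Unear => y Uy; split; last by move=> t; exact: aU.
exact: family_slice_continuous (ca y Uy).
Qed.

Lemma path_eval_continuous_at {Z : topologicalType} (sig : Z -> pathsp R X) z :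
  {for z, continuous sig} -> family_continuous_at (fun y => (sval (sig y)).2) z.
Proof.
move=> csig t; apply: (continuous_comp_at
  (f := fun p : Z * II R => ((sval (sig p.1)).2 : {compact-open, II R -> X}, p.2))
  (g := fun q : {compact-open, II R -> X} * II R => q.1 q.2)); last first.
  apply: eval_continuous_at; [exact: II_compact | exact: II_regular |].
  by have [] := set_valP (sig z).
apply: continuous_pair_at; last exact: continuous_snd_at.
apply: (continuous_comp_at (f := fun p : Z * II R => sig p.1)
  (g := fun w : pathsp R X => (sval w).2)).
  by apply: (continuous_comp_at (f := fst)); [exact: continuous_fst_at | exact: csig].
apply: (continuous_comp_at (g := snd)); [exact: continuous_sval_at | exact: continuous_snd_at].
Qed.

Lemma fibprod_fibre (w : fibprod X) : fp_p X (sval w).1 = fp_p X (sval w).2.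
Proof. exact: set_valP w. Qed.

Lemma fibprod_fst_continuous : continuous (fun w : fibprod X => (sval w).1).
Proof.
move=> w; apply: (continuous_comp_at (g := fst));
  [exact: continuous_sval_at | exact: continuous_fst_at].
Qed.

Lemma fibprod_snd_continuous : continuous (fun w : fibprod X => (sval w).2).
Proof.
move=> w; apply: (continuous_comp_at (g := snd));
  [exact: continuous_sval_at | exact: continuous_snd_at].
Qed.

(* The pair [(x, y)] as a point of [X *_B X] (meaningful when [x] and [y] lie
   in the same fibre). *)
Definition fpair (x y : X) : fibprod X :=
  sub_or (A := fibprod_set X) (fp_s (fibprod X) (fp_p X x)) (x, y).

Lemma fpair_val x y : fp_p X x = fp_p X y -> sval (fpair x y) = (x, y).
Proof. by move=> xy; rewrite /fpair sub_orE. Qed.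

Lemma fpair_fibre x y : fp_p (fibprod X) (fpair x y) = fp_p X x.
Proof.
by apply: (sub_or_ind (P := fun z : X * X => fp_p X z.1 = fp_p X x)) => //=; exact: fp_ps.
Qed.

Lemma fpair_sval (w : fibprod X) : fpair (sval w).1 (sval w).2 = w.
Proof. by rewrite /fpair -surjective_pairing; exact: sub_or_val. Qed.

Lemma fpair_s b : fpair (fp_s X b) (fp_s X b) = fp_s (fibprod X) b.
Proof. by apply: set_val_inj; rewrite fpair_val. Qed.

Lemma fpair_continuous_at {Z : topologicalType} (u v : Z -> X) z :
  {for z, continuous u} -> {for z, continuous v} ->
  (forall y, fp_p X (u y) = fp_p X (v y)) ->
  {for z, continuous (fun y => fpair (u y) (v y))}.
Proof.
move=> cu cv uv; apply: sub_or_continuous_at; first exact: continuous_pair_at.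
exact: (@nearW _ _ _ (nbhs_filter z)).
Qed.

End FibrewiseConstructions.

Lemma secat_le_of_preimage (R : realType) (B B' : topologicalType)
    (E X : fpsp B) (E' X' : fpsp B') (f : E -> X) (f' : E' -> X') (j : X' -> X) :
  (forall U, fp_sectional R f U -> fp_sectional R f' (j @^-1` U)) ->
  (secat R f' <= secat R f)%E.
Proof.
move=> pre; apply: ereal_inf_le_tmp => _ [n [Us [secU covU]] <-].
exists n => //; exists (fun i => j @^-1` Us i); split.
  by move=> i ni; apply: pre; exact: secU.
by move=> x; have [i [ni Uix]] := covU (j x); exists i.
Qed.

(* TC <= cat(X *_B X): a contraction [H] of [U] onto the section gives, for
   [z = (x, y)] in [U], the path from [x] back along the first coordinate of
   [H z] to the section and then along its second coordinate to [y]; this is a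
   section of [Pi_X] over [U], with [Pi_X] composed with it equal to the
   identity. *)
Section TCLeCatFibprod.
Variables (R : realType) (B : topologicalType) (X : fpsp B).
Hypothesis cp : continuous (fp_p X).

Lemma TC_sectional_of_cat_sectional (U : set (fibprod X)) :
  @fp_sectional R B (fp_base B) (fibprod X) (fp_s (fibprod X)) U ->
  fp_sectional R (@Pi R B X) U.
Proof.
case=> oU sU [s [_ _ _ [H [cH pH sH H0 H1]]]].
move/(within_openXT_continuous_at _ oU): cH => cH.
pose a (z : fibprod X) t := (sval (H (z, t))).1.
pose b (z : fibprod X) t := (sval (H (z, t))).2.
pose path := pconcat (preverse a) b.
pose beta (z : fibprod X) := fp_p X (sval z).1.
have cpath z : U z -> family_continuous_at path z.
  move=> Uz; have cHz : family_continuous_at (fun z t => H (z, t)) z.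
    by apply: family_of_map_continuous_at => t; exact: cH.
  apply: pconcat_continuous_at; last by rewrite preverse1 /a /b H0.
  - apply: preverse_continuous_at; apply: (family_postcomp_continuous_at
      (h := fun w : fibprod X => (sval w).1)); [exact: fibprod_fst_continuous | exact: cHz].
  - apply: (family_postcomp_continuous_at (h := fun w : fibprod X => (sval w).2));
      [exact: fibprod_snd_continuous | exact: cHz].
have path_over z t : U z -> fp_p X (path z t) = beta z.
  move=> Uz; apply: (pconcat_ind (P := fun y => fp_p X y = beta z)) => r.
    exact: pH.
  by rewrite -fibprod_fibre; exact: pH.
have path_val z : U z -> sval (path_point (beta z) (path z)) = (beta z, path z).
  move=> Uz; apply: path_point_val; first exact: family_slice_continuous (cpath z Uz).
  by move=> t; exact: path_over.
split => //; exists (fun z => path_point (beta z) (path z)); split.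
- apply/within_open_continuous_at => // z Uz.
  apply: (path_point_continuous_at oU Uz); [|exact: cpath|exact: path_over].
  by apply: (continuous_comp_at (g := fp_p X)); [exact: fibprod_fst_continuous | exact: cp].
- by move=> z Uz; rewrite /= path_val.
- move=> b0; have -> : beta (fp_s (fibprod X) b0) = b0 by exact: fp_ps.
  rewrite -path_point_const; congr path_point.
  apply: funext => t; apply: (pconcat_ind (P := eq^~ (fp_s X b0))) => r.
    by rewrite /preverse /a sH.
  by rewrite /b sH.
exists fst; split => //.
- by apply: continuous_subspaceT => q; exact: continuous_fst_at.
- move=> z Uz; apply: set_val_inj; rewrite /= path_val //=.
  by rewrite [LHS]surjective_pairing /path pconcat0 pconcat1 preverse0 /a /b /= H1.
Qed.

End TCLeCatFibprod.

(* cat <= TC: pull back along [j x = (s (p x), x)].  Over [j^-1 U] the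
   deformation [G] of [Pi_X] composed with the section [sig] to the identity
   yields the path from [s (p x)] backwards along the first coordinate of [G],
   then along the path [sig (j x)], then along the second coordinate of [G]
   to [x]: a fibrewise pointed homotopy from [s o p] to the inclusion. *)
Section CatLeTC.
Variables (R : realType) (B : topologicalType) (X : fpsp B).
Hypotheses (cp : continuous (fp_p X)) (cs : continuous (fp_s X)).

Definition basepoint_pair (x : X) : fibprod X := fpair (fp_s X (fp_p X x)) x.

Lemma basepoint_pair_val x : sval (basepoint_pair x) = (fp_s X (fp_p X x), x).
Proof. by rewrite fpair_val // fp_ps. Qed.

Lemma basepoint_pair_fibre x : fp_p (fibprod X) (basepoint_pair x) = fp_p X x.
Proof. by rewrite fpair_fibre fp_ps. Qed.

Lemma basepoint_pair_s b : basepoint_pair (fp_s X b) = fp_s (fibprod X) b.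
Proof. by rewrite /basepoint_pair fp_ps fpair_s. Qed.

Lemma basepoint_pair_continuous : continuous basepoint_pair.
Proof.
move=> x; apply: (fpair_continuous_at (u := fun y => fp_s X (fp_p X y)) (v := id));
  last by move=> y; rewrite fp_ps.
  by apply: (continuous_comp_at (f := fp_p X)); [exact: cp | exact: cs].
exact: cvg_id.
Qed.

Section Contraction.
Variables (U : set (fibprod X)) (sig : fibprod X -> pathsp R X)
  (G : fibprod X * II R -> fibprod X).
Hypotheses (csig : forall z, U z -> {for z, continuous sig})
  (cG : forall z t, U z -> {for (z, t), continuous G})
  (G0 : forall z, U z -> G (z, I0 R) = Pi (sig z)).

Definition G_fst (x : X) (t : II R) : X := (sval (G (basepoint_pair x, t))).1.
Definition G_snd (x : X) (t : II R) : X := (sval (G (basepoint_pair x, t))).2.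
Definition sig_path (x : X) : II R -> X := (sval (sig (basepoint_pair x))).2.

Definition contraction : X -> II R -> X :=
  pconcat (preverse G_fst) (pconcat sig_path G_snd).

Lemma contraction_continuous_at x :
  U (basepoint_pair x) -> family_continuous_at contraction x.
Proof.
move=> Ux; have cj := basepoint_pair_continuous.
have cGj : family_continuous_at (fun x t => G (basepoint_pair x, t)) x.
  apply: (family_precomp_continuous_at (a := fun w t => G (w, t))); first exact: cj.
  by apply: family_of_map_continuous_at => t; exact: cG.
apply: pconcat_continuous_at.
- apply: preverse_continuous_at; apply: (family_postcomp_continuous_at
    (h := fun w : fibprod X => (sval w).1)); [exact: fibprod_fst_continuous | exact: cGj].
- apply: pconcat_continuous_at; last by rewrite /sig_path /G_snd G0.
    apply: (family_precomp_continuous_at (a := fun w => (sval (sig w)).2)); first exact: cj.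
    exact: path_eval_continuous_at (csig Ux).
  apply: (family_postcomp_continuous_at (h := fun w : fibprod X => (sval w).2));
    [exact: fibprod_snd_continuous | exact: cGj].
- by rewrite preverse1 pconcat0 /G_fst /sig_path G0.
Qed.

End Contraction.

Lemma cat_sectional_of_TC_sectional (U : set (fibprod X)) :
  fp_sectional R (@Pi R B X) U ->
  @fp_sectional R B (fp_base B) X (fp_s X) (basepoint_pair @^-1` U).
Proof.
case=> oU sU [sig [csig psig ssig [G [cG pG sG G0 G1]]]].
move/(within_open_continuous_at _ oU): csig => csig.
move/(within_openXT_continuous_at _ oU): cG => cG.
have oV : open (basepoint_pair @^-1` U).
  by apply: open_comp => // x _; exact: basepoint_pair_continuous.
split => //.
  by move=> _ [b _ <-]; rewrite /= basepoint_pair_s; apply: sU; exists b.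
exists (fp_p X); split; [exact: continuous_subspaceT | by [] | exact: fp_ps |].
exists (fun q => contraction sig G q.1 q.2); split.
- apply/within_openXT_continuous_at => // x t Ux.
  exact: (contraction_continuous_at csig cG G0 Ux).
- move=> x t Ux /=; have jx := basepoint_pair_fibre x.
  apply: (pconcat_ind (P := fun y => fp_p X y = fp_p X x)) => r.
    by rewrite /preverse /G_fst -jx; exact: pG.
  apply: (pconcat_ind (P := fun y => fp_p X y = fp_p X x)) => {}r.
    by rewrite /sig_path path_fibre -jx; exact: psig.
  by rewrite /G_snd -fibprod_fibre -jx; exact: pG.
- move=> b t; apply: (pconcat_ind (P := eq^~ (fp_s X b))) => r.
    by rewrite /preverse /G_fst basepoint_pair_s sG.
  apply: (pconcat_ind (P := eq^~ (fp_s X b))) => {}r.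
    by rewrite /sig_path basepoint_pair_s ssig.
  by rewrite /G_snd basepoint_pair_s sG.
- by move=> x Ux; rewrite /contraction pconcat0 preverse0 /G_fst G1 // basepoint_pair_val.
- by move=> x Ux; rewrite /contraction !pconcat1 /G_snd G1 // basepoint_pair_val.
Qed.

End CatLeTC.

Section PullbackConstructions.
Variables (B B' : topologicalType) (X : fpsp B) (lam : B' -> B).
Let Y := pullback lam X.

(* The pair [(b, x)] as a point of [lam^*(X)] (meaningful when
   [lam b = p x]). *)
Definition pb_point (b : B') (x : X) : Y :=
  sub_or (A := pullback_set lam X) (fp_s Y b) (b, x).

Lemma pb_point_val b x : lam b = fp_p X x -> sval (pb_point b x) = (b, x).
Proof. by move=> bx; rewrite /pb_point sub_orE. Qed.

Lemma pb_point_fibre b x : fp_p Y (pb_point b x) = b.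
Proof. exact: (sub_or_ind (P := fun z : B' * X => z.1 = b)). Qed.

Lemma pb_point_sval (y : Y) : pb_point (sval y).1 (sval y).2 = y.
Proof. by rewrite /pb_point -surjective_pairing; exact: sub_or_val. Qed.

Lemma pb_point_s b : pb_point b (fp_s X (lam b)) = fp_s Y b.
Proof. by apply: set_val_inj; rewrite pb_point_val // fp_ps. Qed.

Lemma pb_point_continuous_at {Z : topologicalType} (beta : Z -> B') (gam : Z -> X) z :
  {for z, continuous beta} -> {for z, continuous gam} ->
  (\forall y \near z, lam (beta y) = fp_p X (gam y)) ->
  {for z, continuous (fun y => pb_point (beta y) (gam y))}.
Proof.
move=> cbeta cgam; apply: (sub_or_continuous_at (g := fun y => (beta y, gam y))).
exact: continuous_pair_at.
Qed.

Definition pb_base (w : fibprod Y) : B' := fp_p Y (sval w).1.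

Definition pb_proj (w : fibprod Y) : fibprod X :=
  fpair (sval (sval w).1).2 (sval (sval w).2).2.

Lemma pb_proj_mem (w : fibprod Y) : fp_p X (sval (sval w).1).2 = fp_p X (sval (sval w).2).2.
Proof.
rewrite -(set_valP (sval w).1) -(set_valP (sval w).2).
by congr lam; exact: (fibprod_fibre w).
Qed.

Lemma pb_proj_val (w : fibprod Y) : sval (pb_proj w) = ((sval (sval w).1).2, (sval (sval w).2).2).
Proof. exact/fpair_val/pb_proj_mem. Qed.

Lemma pb_proj_fibre (w : fibprod Y) : fp_p (fibprod X) (pb_proj w) = lam (pb_base w).
Proof. by rewrite fpair_fibre; symmetry; exact: set_valP (sval w).1. Qed.

Lemma pb_proj_s b : pb_proj (fp_s (fibprod Y) b) = fp_s (fibprod X) (lam b).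
Proof. exact: fpair_s. Qed.

Lemma pb_base_continuous : continuous pb_base.
Proof.
move=> w; apply: (continuous_comp_at (f := fun w : fibprod Y => sval (sval w).1) (g := fst)).
  apply: (continuous_comp_at (g := fun y : Y => sval y)); last exact: continuous_sval_at.
  exact: fibprod_fst_continuous.
exact: continuous_fst_at.
Qed.

Lemma pb_proj_continuous : continuous pb_proj.
Proof.
move=> w; apply: (fpair_continuous_at (u := fun w : fibprod Y => (sval (sval w).1).2)
  (v := fun w : fibprod Y => (sval (sval w).2).2)); last exact: pb_proj_mem.
- apply: (continuous_comp_at (f := fun w : fibprod Y => sval (sval w).1) (g := snd)).
    apply: (continuous_comp_at (g := fun y : Y => sval y)); last exact: continuous_sval_at.
    exact: fibprod_fst_continuous.
  exact: continuous_snd_at.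
- apply: (continuous_comp_at (f := fun w : fibprod Y => sval (sval w).2) (g := snd)).
    apply: (continuous_comp_at (g := fun y : Y => sval y)); last exact: continuous_sval_at.
    exact: fibprod_snd_continuous.
  exact: continuous_snd_at.
Qed.

End PullbackConstructions.
Arguments pb_point {B B' X lam}.
Arguments pb_base {B B' X lam}.
Arguments pb_proj {B B' X lam}.

(* TC(lam^* X) <= TC(X): pull back along [pb_proj].  Over [pb_proj^-1 U], the
   section [sig] and the deformation [G] of [Pi_X] lift to [lam^*(X)] by
   pairing every point of [X] with the common base point in [B']. *)
Section PullbackTC.
Variables (R : realType) (B B' : topologicalType) (X : fpsp B) (lam : B' -> B).
Let Y := pullback lam X.

Lemma pb_point_family_continuous_at {Z : topologicalType} (V : set Z)
    (beta : Z -> B') (a : Z -> II R -> X) z t :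
  open V -> V z -> {for z, continuous beta} -> family_continuous_at a z ->
  (forall y s, V y -> lam (beta y) = fp_p X (a y s)) ->
  {for (z, t), continuous (fun q : Z * II R => pb_point (beta q.1) (a q.1 q.2) : Y)}.
Proof.
move=> oV Vz cbeta ca a_over.
apply: (pb_point_continuous_at (beta := fun q : Z * II R => beta q.1)
  (gam := fun q => a q.1 q.2)); [|exact: ca|].
- by apply: (continuous_comp_at (f := fst)); [exact: continuous_fst_at | exact: cbeta].
- by apply: filterS (near_fst_open t oV Vz) => q; exact: a_over.
Qed.

Section LiftedSectionalData.
Variables (U : set (fibprod X)) (sig : fibprod X -> pathsp R X)
  (G : fibprod X * II R -> fibprod X).
Hypotheses (oU : open U) (csig : forall z, U z -> {for z, continuous sig})
  (psig : forall z, U z -> fp_p (pathsp R X) (sig z) = fp_p (fibprod X) z)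
  (cG : forall z t, U z -> {for (z, t), continuous G})
  (pG : forall z t, U z -> fp_p (fibprod X) (G (z, t)) = fp_p (fibprod X) z).

Definition pb_path (w : fibprod Y) (t : II R) : Y :=
  pb_point (pb_base w) ((sval (sig (pb_proj w))).2 t).

Definition pb_section (w : fibprod Y) : pathsp R Y := path_point (pb_base w) (pb_path w).

Definition pb_homotopy (q : fibprod Y * II R) : fibprod Y :=
  fpair (pb_point (pb_base q.1) (sval (G (pb_proj q.1, q.2))).1)
        (pb_point (pb_base q.1) (sval (G (pb_proj q.1, q.2))).2).

Lemma open_pb_preimage : open (pb_proj @^-1` U : set (fibprod Y)).
Proof. by apply: open_comp => // w _; exact: pb_proj_continuous. Qed.

Lemma pb_path_continuous_at (w : fibprod Y) :
  U (pb_proj w) -> family_continuous_at pb_path w.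
Proof.
move=> Uw t; apply: (pb_point_family_continuous_at (beta := pb_base)
  (a := fun w => (sval (sig (pb_proj w))).2) (t := t) open_pb_preimage Uw).
- exact: pb_base_continuous.
- apply: (family_precomp_continuous_at (a := fun z => (sval (sig z)).2)).
    exact: pb_proj_continuous.
  exact: path_eval_continuous_at (csig Uw).
- move=> y s Uy; rewrite path_fibre -pb_proj_fibre; symmetry; exact: psig.
Qed.

Lemma pb_section_val (w : fibprod Y) :
  U (pb_proj w) -> sval (pb_section w) = (pb_base w, pb_path w).
Proof.
move=> Uw; apply: path_point_val; first exact/family_slice_continuous/pb_path_continuous_at.
by move=> t; exact: pb_point_fibre.
Qed.

Lemma pb_section_continuous_at (w : fibprod Y) :
  U (pb_proj w) -> {for w, continuous pb_section}.
Proof.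
move=> Uw; apply: (path_point_continuous_at open_pb_preimage Uw).
- exact: pb_base_continuous.
- exact: pb_path_continuous_at.
- by move=> *; exact: pb_point_fibre.
Qed.

Lemma pb_homotopy_continuous_at (w : fibprod Y) t :
  U (pb_proj w) -> {for (w, t), continuous pb_homotopy}.
Proof.
move=> Uw; have cGq : family_continuous_at (fun w t => G (pb_proj w, t)) w.
  apply: (family_precomp_continuous_at (a := fun z t => G (z, t))).
    exact: pb_proj_continuous.
  by apply: family_of_map_continuous_at => s; exact: cG.
have G_over (y : fibprod Y) s : U (pb_proj y) ->
    lam (pb_base y) = fp_p X (sval (G (pb_proj y, s))).1.
  by move=> Uy; rewrite -pb_proj_fibre; symmetry; exact: pG.
apply: (fpair_continuous_at
  (u := fun q : fibprod Y * II R => pb_point (pb_base q.1) (sval (G (pb_proj q.1, q.2))).1)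
  (v := fun q : fibprod Y * II R => pb_point (pb_base q.1) (sval (G (pb_proj q.1, q.2))).2))
  => [||q]; last by rewrite !pb_point_fibre.
- apply: (pb_point_family_continuous_at (beta := pb_base)
    (a := fun w t => (sval (G (pb_proj w, t))).1) open_pb_preimage Uw); last exact: G_over.
    exact: pb_base_continuous.
  by apply: (family_postcomp_continuous_at (h := fun z : fibprod X => (sval z).1));
    [exact: fibprod_fst_continuous | exact: cGq].
- apply: (pb_point_family_continuous_at (beta := pb_base)
    (a := fun w t => (sval (G (pb_proj w, t))).2) open_pb_preimage Uw).
  + exact: pb_base_continuous.
  + by apply: (family_postcomp_continuous_at (h := fun z : fibprod X => (sval z).2));
      [exact: fibprod_snd_continuous | exact: cGq].
  + by move=> y s Uy; rewrite -fibprod_fibre; exact: G_over.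
Qed.

End LiftedSectionalData.

Lemma pullback_TC_sectional (U : set (fibprod X)) :
  fp_sectional R (@Pi R B X) U -> fp_sectional R (@Pi R B' Y) (pb_proj @^-1` U).
Proof.
case=> oU sU [sig [csig psig ssig [G [cG pG sG G0 G1]]]].
move/(within_open_continuous_at _ oU): csig => csig.
move/(within_openXT_continuous_at _ oU): cG => cG.
have oV := open_pb_preimage oU.
have pb_base_s b : pb_base (fp_s (fibprod Y) b) = b by exact: fp_ps.
split => //.
  by move=> _ [b _ <-]; rewrite /= pb_proj_s; apply: sU; exists (lam b).
exists (pb_section sig); split.
- apply/within_open_continuous_at => // w Uw.
  exact: (pb_section_continuous_at oU csig psig Uw).
- by move=> w Uw; exact: (congr1 fst (pb_section_val oU csig psig Uw)).
- move=> b; rewrite /pb_section pb_base_s -path_point_const; congr path_point.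
  by apply: funext => t; rewrite /pb_path pb_base_s pb_proj_s ssig pb_point_s.
exists (pb_homotopy G); split.
- apply/within_openXT_continuous_at => // w t Uw.
  exact: (pb_homotopy_continuous_at oU cG pG Uw).
- by move=> w t _; rewrite fpair_fibre pb_point_fibre.
- by move=> b t; rewrite /pb_homotopy /= pb_base_s pb_proj_s sG pb_point_s fpair_s.
- move=> w Uw; apply: set_val_inj; rewrite fpair_val ?pb_point_fibre //=.
  by rewrite (pb_section_val oU csig psig Uw) /= G0.
- move=> w Uw; rewrite /pb_homotopy /= G1 // pb_proj_val /=.
  rewrite {1}/pb_base pb_point_sval.
  have -> : pb_base w = (sval (sval w).2).1 by exact: fibprod_fibre.
  by rewrite pb_point_sval fpair_sval.
Qed.

End PullbackTC.

(* The main theorem keeps all its binders explicit. *)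
Unset Implicit Arguments.

Theorem proposition3p3 (R : realType) (B : topologicalType) (X : fpsp B) :
  is_fpspace X ->
  ((fwcat R X <= fwTC R X)%E /\ (fwTC R X <= fwcat R (fibprod X))%E) /\
  (forall (B' : topologicalType) (lam : B' -> B), continuous lam ->
     (fwTC R (pullback lam X) <= fwTC R X)%E).
Proof.
case=> cp cs; split; [split|].
- apply: (secat_le_of_preimage (j := @basepoint_pair B X)) => U.
  exact: cat_sectional_of_TC_sectional.
- apply: (secat_le_of_preimage (j := id)) => U.
  exact: TC_sectional_of_cat_sectional.
- move=> B' lam _; apply: (secat_le_of_preimage (j := @pb_proj B B' X lam)) => U.
  exact: pullback_TC_sectional.
Qed.
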